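(* Let $T=\{0,\dots,N\}$ and $\mathbb{F}$ a field. Let $C_\bullet$, $C'_\bullet$ be filtrations of finite-dimensional chain complexes $C$, $C'$ over $\mathbb{F}$ with filtration compatible ordered bases $\mathfrak{C}=(c_1,\dots,c_n)$, $\mathfrak{C}'=(c'_1,\dots,c'_n)$ and filtration boundary matrices $D$, $D'$. Let $\varphi_\bullet\colon C_\bullet\to C'_\bullet$ be an injective morphism of filtrations of chain complexes with $\varphi=\varphi_N\colon C\to C'$ an isomorphism, $F$ its matrix with respect to $\mathfrak{C},\mathfrak{C}'$, and $D^{\varphi}=DF^{-1}=F^{-1}D'$. Let $V^{\varphi}$ be an invertible upper-triangular matrix such that $R^{\varphi}=D^{\varphi}V^{\varphi}$ is reduced; interpret columns of $R^{\varphi}$ as coordinate vectors with respect to $\mathfrak{C}$ and columns of $V^\varphi$ and of $FR^{\varphi}$ as coordinate vectors (elements of $C'$) with respect to $\mathfrak{C}'$. Then the family $\operatorname{cols}FR^{\varphi}$ of nonzero columns of $FR^{\varphi}$ is a filtration compatible basis for the filtration $B_*(C'_\bullet)$, $t\mapsto\partial(C'_t)$, and for all $j$ with $r^{\varphi}_j\neq 0$, \[ \operatorname{supp}_{B_*(C'_\bullet)}(Fr^{\varphi}_j)=\operatorname{supp}_{C'_\bullet}(v^{\varphi}_j). \]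
   Context: A chain complex is a finite-dimensional graded vector space with differential $\partial$ of degree $-1$, $\partial^2=0$; a filtration of chain complexes is a chain of subcomplexes $C_0\subseteq\dots\subseteq C_N=C$. Support: $\operatorname{supp}_{M_\bullet}(m)=\{t\mid m\in M_t\}$. A basis $\mathfrak{M}$ of $M_N$ is filtration compatible if $\mathfrak{M}\cap M_t$ is a basis of $M_t$ for all $t$; an ordered such basis is a filtration compatible ordered basis if $m\le m'$ implies $\operatorname{supp}(m')\subseteq\operatorname{supp}(m)$. The filtration boundary matrix is the matrix of $\partial$ in that basis. For a matrix $X$, $x_j$ is its $j$-th column, $\operatorname{cols}X$ the family of its nonzero columns; $\operatorname{piv}x_j$ is the largest row index of a nonzero entry of a nonzero column; $X$ is reduced if no two nonzero columns have the same pivot. *)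

(* Chain complexes are represented in coordinates with
   respect to their (ordered) bases: an n-dimensional complex C with basis
   (c_1,...,c_n) is K^n (column vectors 'cV[K]_n), c_i being the i-th standard
   basis vector, and the differential is given by its matrix D (the
   filtration boundary matrix), acting by v |-> D *m v. *)
From HB Require Import structures.
From mathcomp Require Import all_boot all_order all_algebra.
Set Implicit Arguments. Unset Strict Implicit. Unset Printing Implicit Defensive.
Import GRing.Theory.
Local Open Scope ring_scope.

Section Defs.
Variable K : fieldType.

Definition filtration (vT : vectType K) (N : nat) (M : 'I_N.+1 -> {vspace vT}) :=
  forall s t : 'I_N.+1, (s <= t)%N -> (M s <= M t)%VS.

Definition supp (vT : vectType K) (N : nat) (M : 'I_N.+1 -> {vspace vT}) (m : vT)
  : {set 'I_N.+1} := [set t | m \in M t].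

Definition filt_compatible_basis (vT : vectType K) (N : nat)
  (M : 'I_N.+1 -> {vspace vT}) (B : seq vT) :=
  basis_of (M ord_max) B /\ forall t, basis_of (M t) [seq b <- B | b \in M t].

Definition filt_compatible_ordered_basis (vT : vectType K) (N : nat)
  (M : 'I_N.+1 -> {vspace vT}) (B : seq vT) :=
  filt_compatible_basis M B /\
  forall i j : nat, (i <= j)%N -> (j < size B)%N ->
    supp M (nth 0 B j) \subset supp M (nth 0 B i).

Definition std_basis (n : nat) : seq 'cV[K]_n :=
  [seq delta_mx i 0 | i <- enum 'I_n].

Definition chain_complex (n : nat) (D : 'M[K]_n) := D *m D = 0.

Definition filtration_of_complex (n N : nat) (D : 'M[K]_n)
  (M : 'I_N.+1 -> {vspace 'cV[K]_n}) :=
  [/\ filtration M,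
      forall t v, v \in M t -> D *m v \in M t
    & M ord_max = fullv].

Definition filtration_morphism (n N : nat) (D D' : 'M[K]_n)
  (M M' : 'I_N.+1 -> {vspace 'cV[K]_n}) (F : 'M[K]_n) :=
  F *m D = D' *m F /\ forall t v, v \in M t -> F *m v \in M' t.

Definition injective_filtration_morphism (n N : nat)
  (M : 'I_N.+1 -> {vspace 'cV[K]_n}) (F : 'M[K]_n) :=
  forall t v, v \in M t -> F *m v = 0 -> v = 0.

Definition upper_trig (n : nat) (V : 'M[K]_n) :=
  forall i j : 'I_n, (j < i)%N -> V i j = 0.

Definition piv (m n : nat) (X : 'M[K]_(m, n)) (j : 'I_n) : nat :=
  \max_(i : 'I_m | X i j != 0) (i : nat).

Definition reduced (m n : nat) (X : 'M[K]_(m, n)) :=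
  forall j1 j2 : 'I_n, j1 != j2 -> col j1 X != 0 -> col j2 X != 0 ->
    piv X j1 != piv X j2.

Definition cols (m n : nat) (X : 'M[K]_(m, n)) : seq 'cV[K]_m :=
  [seq col j X | j <- enum 'I_n & col j X != 0].

Definition boundary_filtration (n N : nat) (D : 'M[K]_n)
  (M : 'I_N.+1 -> {vspace 'cV[K]_n}) : 'I_N.+1 -> {vspace 'cV[K]_n} :=
  fun t => (linfun (mulmx D) @: M t)%VS.

End Defs.

(* Since F D = D' F, the matrix F R equals D' V: its j-th column is the
   boundary of the j-th column v_j of V.  Each C'_t is spanned by an initial
   segment of the basis, so the invertible upper triangular V maps C'_t onto
   itself and B_t = D'(C'_t) = D' V (C'_t) is spanned by the columns of F R
   indexed in C'_t.  The nonzero columns of the reduced matrix R have distinct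
   pivots, hence are independent, and so are those of F R.  Finally, if
   D' v_j = D' V u with u in C'_t, then e_j - u lies in ker (F R) = ker R, and
   reducedness forces u_j = 1, so e_j and then v_j lie in C'_t. *)

From HB Require Import structures.
From mathcomp Require Import all_boot all_order all_algebra.
Import GRing.Theory.
Local Open Scope ring_scope.
Set Implicit Arguments. Unset Strict Implicit.

Section Pivots.
Variables (K : fieldType) (m n : nat) (R : 'M[K]_(m, n)).

Lemma piv_nz (j : 'I_n) :
  col j R != 0 -> exists2 p : 'I_m, R p j != 0 & (p : nat) = piv R j.
Proof.
move=> nzj.
have [i Rij] : exists i, R i j != 0.
  apply/existsP; apply: contraR nzj; rewrite negb_exists => /forallP Rj0.
  by apply/eqP/colP => i; rewrite !mxE; apply/eqP/negPn.
have : (0 < #|[pred i | R i j != 0%R]|)%N by apply/card_gt0P; exists i.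
by move/(eq_bigmax_cond (fun p : 'I_m => p : nat)) => [p Rpj pivj]; exists p.
Qed.

Lemma leq_piv (i : 'I_m) (j : 'I_n) : R i j != 0 -> (i <= piv R j)%N.
Proof.
by move=> Rij; rewrite /piv (@leq_bigmax_cond _ _ (fun p : 'I_m => p : nat) _ Rij).
Qed.

(* The nonzero column of largest pivot in the support of z would be the only
   one contributing to that pivot row of R z. *)
Lemma reduced_mul_eq0 (z : 'cV[K]_n) :
  reduced R -> R *m z = 0 -> forall j, col j R != 0 -> z j 0 = 0.
Proof.
move=> redR Rz0 j nzj; apply/eqP/negPn/negP => zj.
pose S := [pred k | (col k R != 0) && (z k 0 != 0)].
have Sj : S j by rewrite /S /= nzj.
have [j0 /andP[nzj0 zj0] maxj0] := arg_maxnP (piv R) Sj.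
have [p Rpj0 pivj0] := piv_nz nzj0.
have : (R *m z) p 0 = 0 by rewrite Rz0 mxE.
rewrite mxE (bigD1 j0) //= big1 ?addr0.
  by move/eqP; rewrite mulf_eq0 (negPf Rpj0) (negPf zj0).
move=> k nkj0; apply/eqP; rewrite mulf_eq0; apply/negPn/negP.
rewrite negb_or => /andP[Rpk zk].
have nzk : col k R != 0 by apply: contraNneq Rpk => /colP/(_ p); rewrite !mxE => ->.
have pivkj0 : piv R k = piv R j0.
  have pivk_le : (piv R k <= piv R j0)%N by apply: maxj0; rewrite /S /= nzk.
  by apply/eqP; rewrite eqn_leq pivk_le -pivj0 leq_piv.
by move: pivkj0; apply/eqP; apply: redR.
Qed.

Lemma free_cols_reduced : reduced R -> free (cols R).
Proof.
move=> redR; rewrite /cols.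
elim: (enum 'I_n) (enum_uniq 'I_n) => [|j s IHs] /=; first by rewrite nil_free.
case/andP=> js /IHs {}IHs; case: ifP => //= nzj; rewrite free_cons IHs andbT.
apply/negP => /(free_span IHs) [k ek _]; rewrite big_map big_filter in ek.
pose z : 'cV[K]_n :=
  delta_mx j 0 - \sum_(i <- s | col i R != 0) k (col i R) *: delta_mx i 0.
have Rz0 : R *m z = 0.
  rewrite mulmxBr mulmx_sumr -colE ek; apply/eqP; rewrite subr_eq0; apply/eqP.
  by apply: eq_bigr => i _; rewrite -scalemxAr colE.
have := reduced_mul_eq0 redR Rz0 nzj.
rewrite /z !mxE summxE big1_seq ?eqxx ?subr0 /= => [/eqP|i /andP[_ si]].
  by rewrite oner_eq0.
by rewrite !mxE; case: eqP => [ij | _]; [move: js; rewrite ij si | rewrite mulr0].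
Qed.

End Pivots.

Section LinearMaps.
Variable K : fieldType.

Lemma free_map_lker0 (vT wT : vectType K) (f : 'Hom(vT, wT)) (X : seq vT) :
  lker f == 0%VS -> free X -> free (map f X).
Proof.
move=> /eqP kerf0 freeX.
suff /andP[] : basis_of (f @: <<X>>) (map f X) by [].
by apply: limg_basis_of; rewrite ?kerf0 ?capv0 // /basis_of eqxx.
Qed.

Lemma limg_lker0_stable (vT : vectType K) (f : 'End(vT)) (U : {vspace vT}) :
  lker f == 0%VS -> (f @: U <= U)%VS -> (f @: U)%VS = U.
Proof.
move=> /eqP kerf0 fUU; apply/eqP.
by rewrite eqEdim fUU limg_dim_eq ?kerf0 ?capv0 ?leqnn.
Qed.

Lemma lker_mulmx_unit n (A : 'M[K]_n) :
  A \in unitmx -> lker (linfun (mulmx A) : 'End('cV[K]_n)) == 0%VS.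
Proof.
move=> uA; apply/lker0P => x y; rewrite !lfunE /= => Axy.
by rewrite -(mulKmx uA x) Axy mulKmx.
Qed.

Lemma mulmx_unit_eq0 m p (A : 'M[K]_m) (B : 'M[K]_(m, p)) :
  A \in unitmx -> (A *m B == 0) = (B == 0).
Proof.
move=> uA; apply/eqP/eqP => [AB0 | ->]; last exact: mulmx0.
by rewrite -(mulKmx uA B) AB0 mulmx0.
Qed.

Lemma cols_mulmx_unit m n (A : 'M[K]_m) (R : 'M[K]_(m, n)) :
  A \in unitmx -> cols (A *m R) = map (mulmx A) (cols R).
Proof.
move=> uA; rewrite /cols -map_comp.
have colAR j : col j (A *m R) = A *m col j R by rewrite !colE mulmxA.
rewrite (eq_map colAR) (eq_filter (a2 := fun j => col j R != 0)) // => j.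
by rewrite colAR mulmx_unit_eq0.
Qed.

End LinearMaps.

Lemma mem_boundary_filtration (K : fieldType) n N (D : 'M[K]_n)
    (M : 'I_N.+1 -> {vspace 'cV[K]_n}) t y :
  reflect (exists2 w, w \in M t & y = D *m w) (y \in boundary_filtration D M t).
Proof. by apply: (iffP memv_imgP) => -[w Mw ->]; exists w; rewrite ?lfunE. Qed.

Section StdOrderedFiltration.
Variables (K : fieldType) (N n : nat) (M : 'I_N.+1 -> {vspace 'cV[K]_n}).
Hypothesis ordM : filt_compatible_ordered_basis M (std_basis K n).

Lemma nth_std_basis (i : 'I_n) : nth 0 (std_basis K n) i = delta_mx i 0.
Proof. by rewrite (nth_map i) ?size_enum_ord ?ltn_ord // nth_ord_enum. Qed.

Lemma delta_mx_memv_leq t (i j : 'I_n) :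
  (i <= j)%N -> delta_mx j 0 \in M t -> delta_mx i 0 \in M t.
Proof.
case: ordM => _ suppM ij; have := suppM i j ij.
rewrite size_map size_enum_ord ltn_ord !nth_std_basis => /(_ isT) /subsetP/(_ t).
by rewrite !inE.
Qed.

Lemma memv_std_filtration t (x : 'cV[K]_n) :
  x \in M t <-> (forall i, x i 0 != 0 -> delta_mx i 0 \in M t).
Proof.
split=> [|xM]; last first.
  rewrite [x]matrix_sum_delta; apply: memv_suml => i _; rewrite big_ord1 ord1.
  by have [->|/xM] := eqVneq (x i 0) 0; [rewrite scale0r mem0v | apply: memvZ].
case: ordM => -[_ /(_ t) /andP[/eqP spanMt _]] _ xM i.
apply: contraR => Mi; move: xM.
rewrite -spanMt => /(coord_span (X := in_tuple _)) ->.
rewrite summxE big1 // => k _; rewrite mxE.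
set X := [seq _ <- _ | _].
have : X`_k \in X by apply: mem_nth; case: k => k /= ->.
rewrite mem_filter => /andP[Mk /mapP[l _ kl]].
rewrite kl mxE; case: eqP => [il|]; last by rewrite mulr0.
by move: Mk; rewrite kl -il (negPf Mi).
Qed.

Variable V : 'M[K]_n.
Hypothesis upV : upper_trig V.

Lemma upper_trig_memv t x : x \in M t -> V *m x \in M t.
Proof.
move/memv_std_filtration => xM; apply/memv_std_filtration => i.
rewrite mxE; apply: contraR => Mi; apply/eqP/big1 => k _.
have [ik | ki] := leqP i k; last by rewrite upV ?mul0r.
have [->|/xM Mk] := eqVneq (x k 0) 0; first by rewrite mulr0.
by rewrite (delta_mx_memv_leq ik Mk) in Mi.
Qed.

Lemma upper_trig_unit_memv t w :
  V \in unitmx -> w \in M t -> exists2 u, u \in M t & w = V *m u.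
Proof.
move=> uV; pose f : 'End('cV[K]_n) := linfun (mulmx V).
have fMt : (f @: M t)%VS = M t.
  apply: limg_lker0_stable; first exact: lker_mulmx_unit.
  by apply/subvP => _ /memv_imgP[x Mx ->]; rewrite lfunE upper_trig_memv.
by rewrite -{1}fMt => /memv_imgP[u Mu ->]; exists u; rewrite ?lfunE.
Qed.

End StdOrderedFiltration.

Section BoundaryBasis.
Variables (K : fieldType) (N n : nat) (M : 'I_N.+1 -> {vspace 'cV[K]_n}).
Variables (D V F R : 'M[K]_n).
Hypotheses (ordM : filt_compatible_ordered_basis M (std_basis K n))
  (upV : upper_trig V) (unitV : V \in unitmx) (unitF : F \in unitmx)
  (redR : reduced R) (FR_DV : F *m R = D *m V).

Let B := boundary_filtration D M.

Lemma col_mul_boundary j : col j (F *m R) = D *m col j V.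
Proof. by rewrite FR_DV !colE mulmxA. Qed.

Lemma free_cols_mul : free (cols (F *m R)).
Proof.
rewrite cols_mulmx_unit //.
have -> : map (mulmx F) (cols R) = map (linfun (mulmx F)) (cols R).
  by apply: eq_map => v; rewrite lfunE.
by apply: free_map_lker0; [apply: lker_mulmx_unit | apply: free_cols_reduced].
Qed.

Lemma col_mul_memv_boundary t j :
  col j R != 0 -> (col j (F *m R) \in B t) = (col j V \in M t).
Proof.
move=> nzj; apply/idP/idP => [/mem_boundary_filtration[w Mw] | MVj]; last first.
  by apply/mem_boundary_filtration; exists (col j V); rewrite ?col_mul_boundary.
have [u Mu ->] := upper_trig_unit_memv ordM upV unitV Mw.
rewrite col_mul_boundary colE !mulmxA => DVj_DVu.
have Rz0 : R *m (delta_mx j 0 - u) = 0.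
  apply/eqP; rewrite -(mulmx_unit_eq0 _ unitF) mulmxA FR_DV mulmxBr.
  by rewrite DVj_DVu subrr.
have := reduced_mul_eq0 redR Rz0 nzj; rewrite !mxE eqxx => /eqP.
rewrite subr_eq0 => /eqP uj1.
apply: (upper_trig_memv ordM upV).
by apply: (proj1 (memv_std_filtration ordM t u) Mu); rewrite -uj1 oner_neq0.
Qed.

Lemma basis_boundary t : basis_of (B t) [seq b <- cols (F *m R) | b \in B t].
Proof.
rewrite /basis_of filter_free ?free_cols_mul // andbT eqEsubv.
apply/andP; split; first by apply/span_subvP => y; rewrite mem_filter => /andP[].
apply/subvP => _ /mem_boundary_filtration[w Mw ->].
have [u Mu ->] := upper_trig_unit_memv ordM upV unitV Mw.
rewrite mulmxA -FR_DV [u]matrix_sum_delta mulmx_sumr; apply: memv_suml => i _.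
rewrite big_ord1 -scalemxAr -colE.
have [->|/(proj1 (memv_std_filtration ordM t u) Mu i) Mi] := eqVneq (u i 0) 0.
  by rewrite scale0r mem0v.
apply: memvZ; have [->|nzi] := eqVneq (col i (F *m R)) 0; first exact: mem0v.
have Bi : col i (F *m R) \in B t.
  apply/mem_boundary_filtration; exists (col i V); rewrite ?col_mul_boundary //.
  by rewrite colE (upper_trig_memv ordM upV Mi).
apply: memv_span; rewrite mem_filter Bi; apply/mapP; exists i => //.
by rewrite mem_filter nzi mem_enum.
Qed.

End BoundaryBasis.

Unset Implicit Arguments.
Theorem lemma3p7 (K : fieldType) (N n : nat)
  (D D' : 'M[K]_n) (C C' : 'I_N.+1 -> {vspace 'cV[K]_n})
  (F V : 'M[K]_n) :
  chain_complex D -> chain_complex D' ->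
  filtration_of_complex D C -> filtration_of_complex D' C' ->
  filt_compatible_ordered_basis C (std_basis K n) ->
  filt_compatible_ordered_basis C' (std_basis K n) ->
  filtration_morphism D D' C C' F ->
  injective_filtration_morphism C F ->
  F \in unitmx ->
  upper_trig V -> V \in unitmx ->
  reduced (D *m invmx F *m V) ->
  let R := D *m invmx F *m V in
  filt_compatible_basis (boundary_filtration D' C') (cols (F *m R)) /\
  forall j : 'I_n, col j R != 0 ->
    supp (boundary_filtration D' C') (col j (F *m R)) = supp C' (col j V).
Proof.
move=> _ _ _ [_ _ C'_top] _ ordC' [FD_D'F _] _ unitF upV unitV redR R.
have FR_D'V : F *m R = D' *m V by rewrite /R !mulmxA FD_D'F mulmxK.
have basisB := basis_boundary ordC' upV unitV unitF redR FR_D'V.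
split; last first.
  move=> j nzj; apply/setP => t; rewrite !inE.
  exact: col_mul_memv_boundary ordC' upV unitV unitF redR FR_D'V t j nzj.
split; last exact: basisB.
suff /all_filterP <- :
    all (mem (boundary_filtration D' C' ord_max)) (cols (F *m R)).
  exact: basisB.
apply/allP => _ /mapP[j _ ->]; apply/mem_boundary_filtration.
by exists (col j V); rewrite ?C'_top ?memvf // (col_mul_boundary FR_D'V).
Qed.
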